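(* Let $a,b\in\mathbb R$, $a<b$, let $f_1,f_2:[a,b]\to[0,+\infty)$ and $g:(0,+\infty)\to\mathbb R$ be continuous, with $f_i>0$ on $(a,b)$ for $i=1,2$ and $g$ nondecreasing. Assume $\overline D^2f_1(x)\ge g(f_1(x))$ and $\underline D^2f_2(x)\le g(f_2(x))$ for every $x\in(a,b)$. Then: (1) if $f_1(a)=f_2(a)$ and $f_1(a')>f_2(a')$ for some $a'\in(a,b]$, then $f_1(x)>f_2(x)$ for every $x\in[a',b]$; (2) if $f_1(b)=f_2(b)$ and $f_1(b')>f_2(b')$ for some $b'\in[a,b)$, then $f_1(x)>f_2(x)$ for every $x\in[a,b']$; (3) if $f_1(a)=f_2(a)$ and $f_1(b)=f_2(b)$, then $f_2(x)\ge f_1(x)$ for every $x\in[a,b]$; moreover, if $f_2(x_0)=f_1(x_0)$ for some $x_0\in(a,b)$, then the right derivatives of $f_1,f_2$ at $x_0$ coincide and the left derivatives of $f_1,f_2$ at $x_0$ coincide (these one-sided derivatives exist).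
   Context: $\overline D^2f(x)=\limsup_{h\to0^+}\frac{f(x+h)+f(x-h)-2f(x)}{h^2}$ and $\underline D^2f(x)=\liminf_{h\to0^+}\frac{f(x+h)+f(x-h)-2f(x)}{h^2}$. *)

From HB Require Import structures.
From mathcomp Require Import all_boot all_order all_algebra.
From mathcomp Require Import all_classical all_reals all_analysis.
Set Implicit Arguments. Unset Strict Implicit. Unset Printing Implicit Defensive.
Import Order.TTheory GRing.Theory Num.Theory.
Import numFieldNormedType.Exports.
Local Open Scope classical_set_scope.
Local Open Scope ring_scope.

Definition sdq2 {R : realType} (f : R -> R) (x h : R) : R :=
  (f (x + h) + f (x - h) - 2 * f x) / h ^+ 2.

Definition upperD2 {R : realType} (f : R -> R) (x : R) : \bar R :=
  limf_esup (fun h : R => (sdq2 f x h)%:E) (0^'+).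
Definition lowerD2 {R : realType} (f : R -> R) (x : R) : \bar R :=
  limf_einf (fun h : R => (sdq2 f x h)%:E) (0^'+).

Definition dq {R : realType} (f : R -> R) (x h : R) : R := (f (x + h) - f x) / h.

(* If [c < upperD2 f] on an interval, then [f - c x^2/2] has second differences
   that are positive at arbitrarily small scales, so by the maximum principle it
   lies below its chords: it is convex, and [c <= sdq2 f x t] at every scale [t]
   that fits in the interval.  Near a point where [f2 < f1], fix a level [lam]
   between them; monotonicity of [g] gives [g lam - e/2 < g (f1 z)] and
   [g (f2 z) < g lam + e/2], hence [sdq2 f1 - sdq2 f2 >= - e] at all small scales.
   So the maximum principle applies to [f1 - f2 - e (x - al) (be - x)] on any
   [[al, be]] with [f1 <= f2] at the ends, and [f1 <= f2] inside follows as
   [e -> 0].  At a contact point [x0], [f1] and [- f2] are convex up to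
   quadratics, so they have one-sided derivatives with [D- f1 <= D+ f1] and
   [D+ f2 <= D- f2]; as [f1 <= f2] with equality at [x0], also [D+ f1 <= D+ f2]
   and [D- f2 <= D- f1], so all of these inequalities are equalities. *)

From HB Require Import structures.
From mathcomp Require Import all_boot all_order all_algebra.
From mathcomp Require Import all_classical all_reals all_analysis.
From mathcomp Require Import ring lra.
Import Order.TTheory GRing.Theory Num.Theory.
Import numFieldNormedType.Exports.
Local Open Scope classical_set_scope.
Local Open Scope ring_scope.
Set Implicit Arguments. Unset Strict Implicit.

Section SecondDifferences.
Variable R : realType.
Implicit Types (f u : R -> R) (x t c : R).

Lemma sdq2N f x t : sdq2 (fun y => - f y) x t = - sdq2 f x t.
Proof. rewrite /sdq2; ring. Qed.

Lemma sdq2_sub_affine u (p q : R) x t :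
  sdq2 (fun y => u y - (p + q * y)) x t = sdq2 u x t.
Proof. by rewrite /sdq2; congr (_ / _); ring. Qed.

Lemma sdq2_sub_sq u c x t : t != 0 ->
  sdq2 (fun y => u y - c * y ^+ 2 / 2) x t = sdq2 u x t - c.
Proof. by move=> t0; rewrite /sdq2; field. Qed.

Lemma lowerD2E f x : lowerD2 f x = (- upperD2 (fun y => (- f y)%R) x)%E.
Proof.
rewrite /lowerD2 /upperD2 /limf_einf; congr (- limf_esup _ _)%E.
by apply/funext => h /=; rewrite sdq2N.
Qed.

Lemma upperD2_gt_sdq2 f x r : (r%:E < upperD2 f x)%E ->
  forall eta, 0 < eta -> exists2 t, 0 < t < eta & r < sdq2 f x t.
Proof.
move=> r_lt eta eta0.
have small_right : \forall t \near 0^'+, 0 < t < eta.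
  near=> t; apply/andP; split; near: t.
  - exact: nbhs_right_gt.
  - exact: nbhs_right_lt.
have : (r%:E < ereal_sup ((fun h => (sdq2 f x h)%:E) @` [set t : R | (0 < t < eta)%R]))%E.
  by apply: (lt_le_trans r_lt); apply: ereal_inf_lbound; exists [set t : R | 0 < t < eta].
by move/ereal_sup_gt => [_ [t t_small <-]]; rewrite lte_fin; exists t.
Unshelve. all: by end_near. Qed.

Lemma within_continuousB (A : set R) u v :
  {within A, continuous u} -> {within A, continuous v} ->
  {within A, continuous (fun y => u y - v y)}.
Proof. by move=> cu cv x; apply: cvgB; [exact: cu | exact: cv]. Qed.

Lemma within_continuous_sub_itv u (a b al be : R) :
  {within `[a, b], continuous u} -> a <= al -> be <= b ->
  {within `[al, be], continuous u}.
Proof.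
move=> cu a_al be_b; apply: continuous_subspaceW cu => y /=.
by rewrite !in_itv /= => /andP[al_y y_be]; apply/andP; split; lra.
Qed.

Lemma within_itv_continuous_interior f (a b x : R) : {within `[a, b], continuous f} ->
  a < x < b -> f y @[y --> x] --> f x.
Proof.
move=> cf x_in; have /andP[a_x x_b] := x_in.
have [cf_in _ _] := (continuous_within_itvP f (lt_trans a_x x_b)).1 cf.
by apply: cf_in; rewrite in_itv.
Qed.

Lemma near_in_open_itv (a b y : R) : a < y < b -> \forall z \near y, a < z < b.
Proof.
move=> y_in; have : y \in `]a, b[ by rewrite in_itv.
by move/near_in_itvoo; apply: filterS => z; rewrite in_itv.
Qed.

Lemma nbhs_closed_interval (x : R) (P : R -> Prop) : (\forall y \near x, P y) ->
  exists2 rho, 0 < rho & forall y, x - rho <= y <= x + rho -> P y.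
Proof.
move=> /nbhs_ballP[r /= r_gt0 ball_P]; exists (r / 2); first by rewrite divr_gt0.
move=> y /andP[y_ge y_le]; apply: ball_P; rewrite /ball /= ltr_norml; apply/andP; split; lra.
Qed.

Definition sdq2_frequently_pos u x :=
  forall eta, 0 < eta -> exists2 t, 0 < t < eta & 0 < sdq2 u x t.

Lemma near_sdq2_frequently_pos u x :
  (\forall t \near 0^'+, 0 < sdq2 u x t) -> sdq2_frequently_pos u x.
Proof.
move=> near_pos eta eta0; near (0 : R)^'+ => t.
exists t; last by near: t.
by apply/andP; split; near: t; [apply: nbhs_right_gt | apply: nbhs_right_lt].
Unshelve. all: by end_near.
Qed.

Lemma sdq2_maximum_principle u (al be : R) : al < be ->
  {within `[al, be], continuous u} -> u al <= 0 -> u be <= 0 ->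
  (forall x, al < x < be -> 0 < u x -> sdq2_frequently_pos u x) ->
  forall x, al <= x <= be -> u x <= 0.
Proof.
move=> al_be cu u_al u_be freq x x_in; rewrite leNgt; apply/negP => ux_gt0.
have [c /[!in_itv] /= /andP[al_c c_be] c_max] := EVT_max (ltW al_be) cu.
have uc_ge : u x <= u c by apply: c_max; rewrite in_itv.
have al_lt_c : al < c by rewrite lt_neqAle al_c andbT; apply/eqP => E; subst c; lra.
have c_lt_be : c < be by rewrite lt_neqAle c_be andbT; apply/eqP => E; subst c; lra.
have c_in : al < c < be by rewrite al_lt_c c_lt_be.
have eta0 : 0 < Num.min (c - al) (be - c) by rewrite lt_min; apply/andP; split; lra.
have [t /andP[t_gt0 t_small] sdq2_gt0] := freq c c_in (lt_le_trans ux_gt0 uc_ge) _ eta0.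
move: t_small; rewrite lt_min => /andP[t_lt1 t_lt2].
have u_plus : u (c + t) <= u c by apply: c_max; rewrite in_itv /=; apply/andP; split; lra.
have u_minus : u (c - t) <= u c by apply: c_max; rewrite in_itv /=; apply/andP; split; lra.
move: sdq2_gt0; rewrite /sdq2 pmulr_lgt0 ?invr_gt0 ?exprn_gt0 //; lra.
Qed.

Definition convex_on u (al be : R) := forall x y z, al <= x -> x < z -> z <= be ->
  x <= y <= z -> u y * (z - x) <= u x * (z - y) + u z * (y - x).

Lemma sdq2_frequently_pos_chord u (al be : R) : al < be ->
  {within `[al, be], continuous u} ->
  (forall x, al < x < be -> sdq2_frequently_pos u x) ->
  forall y, al <= y <= be -> u y * (be - al) <= u al * (be - y) + u be * (y - al).
Proof.
move=> al_be cu freq y y_in.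
pose q := (u be - u al) / (be - al); pose p := u al - q * al.
have al_be0 : be - al != 0 by rewrite subr_eq0 gt_eqF.
have chord_al : p + q * al = u al by rewrite /p; ring.
have chord_be : p + q * be = u be by rewrite /p /q; field.
have c_affine : {within `[al, be], continuous (fun y => p + q * y)}.
  apply: continuous_subspaceT => z.
  by apply: cvgD; [exact: cvg_cst | apply: cvgM; [exact: cvg_cst | exact: cvg_id]].
have : u y - (p + q * y) <= 0.
  have cdiff : {within `[al, be], continuous (fun y => u y - (p + q * y))} :=
    within_continuousB cu c_affine.
  apply: (sdq2_maximum_principle al_be cdiff) => //.
  - by rewrite chord_al subrr.
  - by rewrite chord_be subrr.
  - move=> z z_in _ eta eta0; have [t t_small] := freq z z_in eta eta0.
    by exists t; rewrite ?sdq2_sub_affine.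
rewrite subr_le0 -(ler_pM2r (_ : 0 < be - al)); last lra.
suff -> : (p + q * y) * (be - al) = u al * (be - y) + u be * (y - al) by [].
by rewrite /p /q; field.
Qed.

Lemma convex_on_sdq2_frequently_pos u (al be : R) :
  {within `[al, be], continuous u} ->
  (forall x, al < x < be -> sdq2_frequently_pos u x) -> convex_on u al be.
Proof.
move=> cu freq x y z al_x x_z z_be y_in.
apply: sdq2_frequently_pos_chord => //.
- by apply: (within_continuous_sub_itv cu); lra.
- by move=> w /andP[x_w w_z]; apply: freq; apply/andP; split; lra.
Qed.

Lemma convex_on_sub_sq f (c al be : R) : {within `[al, be], continuous f} ->
  (forall y, al < y < be -> (c%:E < upperD2 f y)%E) ->
  convex_on (fun y => f y - c * y ^+ 2 / 2) al be.
Proof.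
move=> cf c_lt; apply: convex_on_sdq2_frequently_pos.
  apply: within_continuousB cf _; apply: continuous_subspaceT => y.
  by apply: cvgM; [apply: cvgM; [exact: cvg_cst | exact: exprn_continuous] | exact: cvg_cst].
move=> y y_in eta eta0; have [t /andP[t_gt0 t_lt] c_lt_sdq2] := upperD2_gt_sdq2 (c_lt y y_in) eta0.
by exists t; rewrite ?t_gt0 // sdq2_sub_sq ?lt0r_neq0 // subr_gt0.
Qed.

Lemma convex_on_sdq2_ge0 u (al be x t : R) : convex_on u al be ->
  0 < t -> al <= x - t -> x + t <= be -> 0 <= sdq2 u x t.
Proof.
move=> cvx t_gt0 al_xt xt_be.
have chord : u x * (x + t - (x - t)) <= u (x - t) * (x + t - x) + u (x + t) * (x - (x - t)).
  by apply: cvx => //; [lra | apply/andP; split; lra].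
have chord_ge0 : 0 <= t * (u (x + t) + u (x - t) - 2 * u x).
  by rewrite (_ : t * _ = u (x - t) * t + u (x + t) * t - u x * (2 * t)); [lra | ring].
by rewrite /sdq2 divr_ge0 ?sqr_ge0 // -(pmulr_rge0 _ t_gt0).
Qed.

Lemma sdq2_ge_convex_sub_sq u (c al be x t : R) :
  convex_on (fun y => u y - c * y ^+ 2 / 2) al be ->
  0 < t -> al <= x - t -> x + t <= be -> c <= sdq2 u x t.
Proof.
move=> cvx t_gt0 al_xt xt_be; have := convex_on_sdq2_ge0 cvx t_gt0 al_xt xt_be.
by rewrite sdq2_sub_sq ?lt0r_neq0 // subr_ge0.
Qed.

Lemma convex_on_dq_le u (al be x0 h1 h2 : R) : convex_on u al be ->
  al <= x0 <= be -> h1 != 0 -> h2 != 0 -> al <= x0 + h1 -> h1 <= h2 -> x0 + h2 <= be ->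
  dq u x0 h1 <= dq u x0 h2.
Proof.
move=> cvx /andP[al_x0 x0_be] h1_neq0 h2_neq0 al_h1; rewrite le_eqVlt.
case/orP=> [/eqP <- // | h1_h2 h2_be].
set A := u (x0 + h1) - u x0; set B := u (x0 + h2) - u x0.
(* [dq u x0 h2 - dq u x0 h1 = (B h1 - A h2) / (h1 h2)], and each sign pattern of
   [h1, h2] is one chord inequality. *)
have key : 0 <= (B * h1 - A * h2) * (h1 * h2).
  move: h1_neq0 h2_neq0; rewrite !neq_lt => /orP[h1_lt0|h1_gt0] /orP[h2_lt0|h2_gt0].
  - have chord := cvx (x0 + h1) (x0 + h2) x0 al_h1 ltac:(lra) x0_be ltac:(lra).
    by apply: mulr_ge0; rewrite /A /B; nra.
  - have chord := cvx (x0 + h1) x0 (x0 + h2) al_h1 ltac:(lra) h2_be ltac:(lra).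
    by apply: mulr_le0; rewrite /A /B; nra.
  - by lra.
  - have chord := cvx x0 (x0 + h1) (x0 + h2) al_x0 ltac:(lra) h2_be ltac:(lra).
    by apply: mulr_ge0; rewrite /A /B; nra.
rewrite -subr_ge0 (_ : _ - _ = (B * h1 - A * h2) * (h1 * h2) / (h1 * h2) ^+ 2).
  by rewrite divr_ge0 ?sqr_ge0.
by rewrite /dq /A /B; field; rewrite h1_neq0 h2_neq0.
Qed.

Lemma convex_on_cvg_dq_right u (al be x0 : R) : al < x0 < be -> convex_on u al be ->
  cvg (dq u x0 h @[h --> 0^'+]).
Proof.
move=> /andP[al_x0 x0_be] cvx; have x0_in : al <= x0 <= be by rewrite !ltW.
have al_x0' : (al - x0) / 2 < 0 by lra.
apply: nondecreasing_at_right_is_cvgr; near=> e;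
  have e_small : e < be - x0 by near: e; apply: nbhs_right_lt; lra.
- move=> y z /[!in_itv] /= /andP[y_gt0 y_e] /andP[z_gt0 z_e] y_z.
  apply: (convex_on_dq_le cvx x0_in (lt0r_neq0 y_gt0) (lt0r_neq0 z_gt0)) => //; lra.
- exists (dq u x0 ((al - x0) / 2)) => _ [y /= + <-].
  rewrite in_itv /= => /andP[y_gt0 y_e].
  apply: (convex_on_dq_le cvx x0_in (ltr0_neq0 al_x0') (lt0r_neq0 y_gt0)); lra.
Unshelve. all: by end_near.
Qed.

Lemma convex_on_cvg_dq_left u (al be x0 : R) : al < x0 < be -> convex_on u al be ->
  cvg (dq u x0 h @[h --> 0^'-]).
Proof.
move=> /andP[al_x0 x0_be] cvx; have x0_in : al <= x0 <= be by rewrite !ltW.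
have be_x0' : 0 < (be - x0) / 2 by lra.
apply: nondecreasing_at_left_is_cvgr; near=> e;
  have e_small : al - x0 < e by near: e; apply: nbhs_left_gt; lra.
- move=> y z /[!in_itv] /= /andP[e_y y_lt0] /andP[e_z z_lt0] y_z.
  apply: (convex_on_dq_le cvx x0_in (ltr0_neq0 y_lt0) (ltr0_neq0 z_lt0)) => //; lra.
- exists (dq u x0 ((be - x0) / 2)) => _ [y /= + <-].
  rewrite in_itv /= => /andP[e_y y_lt0].
  apply: (convex_on_dq_le cvx x0_in (ltr0_neq0 y_lt0) (lt0r_neq0 be_x0')); lra.
Unshelve. all: by end_near.
Qed.

Lemma convex_on_one_sided_derivatives u (al be x0 : R) : al < x0 < be ->
  convex_on u al be -> exists dr dl,
  [/\ dq u x0 h @[h --> 0^'+] --> dr, dq u x0 h @[h --> 0^'-] --> dl & dl <= dr].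
Proof.
move=> x0_in cvx; have /andP[al_x0 x0_be] := x0_in.
have x0_in' : al <= x0 <= be by rewrite !ltW.
have /cvg_ex[dr dr_lim] := convex_on_cvg_dq_right x0_in cvx.
have /cvg_ex[dl dl_lim] := convex_on_cvg_dq_left x0_in cvx.
exists dr, dl; split => //.
have dl_le_dq : forall h, 0 < h < be - x0 -> dl <= dq u x0 h.
  move=> h /andP[h_gt0 h_lt]; apply: (ler_cvg_to dl_lim (cvg_cst _)); near=> y.
  have y_lt0 : y < 0 by near: y; apply: nbhs_left_lt.
  have y_gt : al - x0 < y by near: y; apply: nbhs_left_gt; lra.
  by apply: (convex_on_dq_le cvx x0_in' (ltr0_neq0 y_lt0) (lt0r_neq0 h_gt0)); lra.
apply: (ler_cvg_to (cvg_cst _) dr_lim); near=> h; apply: dl_le_dq; apply/andP; split.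
- by near: h; apply: nbhs_right_gt.
- by near: h; apply: nbhs_right_lt; lra.
Unshelve. all: by end_near.
Qed.

Lemma dq_sub_sq u (c x0 h : R) : h != 0 ->
  dq u x0 h = dq (fun y => u y - c * y ^+ 2 / 2) x0 h + c * (x0 + h / 2).
Proof. by move=> h_neq0; rewrite /dq; field. Qed.

Lemma cvg_dq_sub_sq (F : set_system R) {FF : Filter F} u (c x0 l : R) :
  F --> (0 : R) -> (\forall h \near F, h != 0) ->
  dq (fun y => u y - c * y ^+ 2 / 2) x0 h @[h --> F] --> l ->
  dq u x0 h @[h --> F] --> l + c * x0.
Proof.
move=> F0 F_neq0 lim.
have E : {near F, (fun h => dq (fun y => u y - c * y ^+ 2 / 2) x0 h + c * (x0 + h / 2))
    =1 dq u x0}.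
  by apply: filterS F_neq0 => h h_neq0; rewrite [RHS](dq_sub_sq _ c).
apply: cvg_trans (near_eq_cvg E) _.
apply: cvgD => //; rewrite [X in _ --> X](_ : _ = c * (x0 + 0 / 2)); last first.
  by rewrite mul0r addr0.
apply: cvgM; [exact: cvg_cst | apply: cvgD; [exact: cvg_cst | exact: cvgM F0 (cvg_cst _)]].
Qed.

Lemma convex_sub_sq_one_sided_derivatives u (c al be x0 : R) : al < x0 < be ->
  convex_on (fun y => u y - c * y ^+ 2 / 2) al be -> exists dr dl,
  [/\ dq u x0 h @[h --> 0^'+] --> dr, dq u x0 h @[h --> 0^'-] --> dl & dl <= dr].
Proof.
move=> x0_in cvx.
have [dr [dl [dr_lim dl_lim dl_dr]]] := convex_on_one_sided_derivatives x0_in cvx.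
exists (dr + c * x0), (dl + c * x0); split; last by rewrite lerD2r.
- apply: cvg_dq_sub_sq dr_lim; first exact: cvg_at_right_filter.
  by near=> h; apply: lt0r_neq0; near: h; apply: nbhs_right_gt.
- apply: cvg_dq_sub_sq dl_lim; first exact: cvg_at_left_filter.
  by near=> h; apply: ltr0_neq0; near: h; apply: nbhs_left_lt.
Unshelve. all: by end_near.
Qed.

Lemma cvg_dqN (F : set_system R) {FF : Filter F} f (x0 l : R) :
  dq (fun y => - f y) x0 h @[h --> F] --> l -> dq f x0 h @[h --> F] --> - l.
Proof.
move=> lim; rewrite (_ : dq f x0 = fun h => - dq (fun y => - f y) x0 h).
  exact: cvgN.
by apply/funext => h; rewrite /dq -mulNr opprB opprK addrC.
Qed.

Lemma touching_one_sided_derivatives u v (al be x0 dru dlu drv dlv : R) :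
  al < x0 < be -> (forall y, al < y < be -> u y <= v y) -> u x0 = v x0 ->
  dq u x0 h @[h --> 0^'+] --> dru -> dq u x0 h @[h --> 0^'-] --> dlu -> dlu <= dru ->
  dq v x0 h @[h --> 0^'+] --> drv -> dq v x0 h @[h --> 0^'-] --> dlv -> drv <= dlv ->
  dru = drv /\ dlu = dlv.
Proof.
move=> /andP[al_x0 x0_be] u_le_v uv_x0 ur ul ulr vr vl vrl.
have right_le : dru <= drv.
  apply: (ler_cvg_to ur vr); near=> h.
  have h_gt0 : 0 < h by near: h; apply: nbhs_right_gt.
  have h_lt : h < be - x0 by near: h; apply: nbhs_right_lt; lra.
  by rewrite /dq uv_x0 ler_pM2r ?invr_gt0 // lerD2r u_le_v //; lra.
have left_le : dlv <= dlu.
  apply: (ler_cvg_to vl ul); near=> h.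
  have h_lt0 : h < 0 by near: h; apply: nbhs_left_lt.
  have h_gt : al - x0 < h by near: h; apply: nbhs_left_gt; lra.
  by rewrite /dq uv_x0 ler_nM2r ?invr_lt0 // lerD2r u_le_v //; lra.
(* [dru <= drv <= dlv <= dlu <= dru] *)
by split; lra.
Unshelve. all: by end_near.
Qed.

Section Comparison.
Variables (a b : R) (f1 f2 g : R -> R).
Hypothesis f1_cont : {within `[a, b], continuous f1}.
Hypothesis f2_cont : {within `[a, b], continuous f2}.
Hypothesis f1_gt0 : forall x, a < x < b -> 0 < f1 x.
Hypothesis f2_gt0 : forall x, a < x < b -> 0 < f2 x.
Hypothesis g_homo : {in `]0, +oo[ &, {homo g : x y / x <= y}}.
Hypothesis f1_upperD2 : forall x, a < x < b -> ((g (f1 x))%:E <= upperD2 f1 x)%E.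
Hypothesis f2_lowerD2 : forall x, a < x < b -> (lowerD2 f2 x <= (g (f2 x))%:E)%E.

Lemma local_convexity y (c1 c2 : R) : a < y < b ->
  (\forall z \near y, c1 < g (f1 z) /\ g (f2 z) < c2) ->
  exists rho, [/\ 0 < rho, a <= y - rho, y + rho <= b,
    convex_on (fun z => f1 z - c1 * z ^+ 2 / 2) (y - rho) (y + rho) &
    convex_on (fun z => - f2 z - - c2 * z ^+ 2 / 2) (y - rho) (y + rho)].
Proof.
move=> y_in near_c.
have [rho rho_gt0 rho_P] : exists2 rho, 0 < rho & forall z, y - rho <= z <= y + rho ->
    (c1 < g (f1 z) /\ g (f2 z) < c2) /\ a < z < b.
  apply: nbhs_closed_interval; near=> z; split; near: z => //.
  exact: near_in_open_itv.
have [_ /andP[a_lt _]] := rho_P (y - rho) ltac:(lra).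
have [_ /andP[_ lt_b]] := rho_P (y + rho) ltac:(lra).
have sub_itv z : y - rho < z < y + rho -> (c1 < g (f1 z) /\ g (f2 z) < c2) /\ a < z < b.
  by move=> z_in; apply: rho_P; lra.
exists rho; split; rewrite ?ltW //.
- apply: convex_on_sub_sq; first by apply: (within_continuous_sub_itv f1_cont); lra.
  move=> z /sub_itv[[c1_lt _] z_in]; apply: lt_le_trans (f1_upperD2 z_in).
  by rewrite lte_fin.
- apply: convex_on_sub_sq.
    by move=> z; apply: cvgN; apply: (within_continuous_sub_itv f2_cont); lra.
  move=> z /sub_itv[[_ lt_c2] z_in]; have := f2_lowerD2 z_in.
  rewrite lowerD2E EFinN lteNl => /le_lt_trans; apply; by rewrite lte_fin.
Unshelve. all: by end_near.
Qed.

Lemma near_sdq2_sub_ge y (e : R) : a < y < b -> f2 y < f1 y -> 0 < e ->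
  \forall t \near 0^'+, - e <= sdq2 f1 y t - sdq2 f2 y t.
Proof.
move=> y_in f21_y e_gt0; pose lam := (f1 y + f2 y) / 2.
have near_lam : \forall z \near y, g lam - e / 2 < g (f1 z) /\ g (f2 z) < g lam + e / 2.
  near=> z.
  have lam_f1 : lam < f1 z.
    near: z; apply: (cvgr_gt _ (within_itv_continuous_interior f1_cont y_in)); rewrite /lam; lra.
  have f2_lam : f2 z < lam.
    near: z; apply: (cvgr_lt _ (within_itv_continuous_interior f2_cont y_in)); rewrite /lam; lra.
  have f2z_gt0 : 0 < f2 z by apply: f2_gt0; near: z; exact: near_in_open_itv.
  have g_lam_f1 : g lam <= g (f1 z) by apply: g_homo; rewrite ?in_itv /= ?andbT; lra.
  have g_f2_lam : g (f2 z) <= g lam by apply: g_homo; rewrite ?in_itv /= ?andbT; lra.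
  by split; lra.
have [rho [rho_gt0 _ _ cvx1 cvx2]] := local_convexity y_in near_lam.
near=> t.
have t_gt0 : 0 < t by near: t; apply: nbhs_right_gt.
have t_lt : t < rho by near: t; apply: nbhs_right_lt.
have t_in : y - rho <= y - t /\ y + t <= y + rho by split; lra.
have := sdq2_ge_convex_sub_sq cvx1 t_gt0 t_in.1 t_in.2.
have := sdq2_ge_convex_sub_sq cvx2 t_gt0 t_in.1 t_in.2.
by rewrite sdq2N; lra.
Unshelve. all: by end_near.
Qed.

Lemma comparison_principle (al be : R) : a <= al -> al < be -> be <= b ->
  f1 al <= f2 al -> f1 be <= f2 be -> forall x, al <= x <= be -> f1 x <= f2 x.
Proof.
move=> a_al al_be be_b f12_al f12_be x x_in; have /andP[al_x x_be] := x_in.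
have eps_bound e : 0 < e -> f1 x - f2 x <= e * ((x - al) * (be - x)).
  move=> e_gt0; pose k y := f1 y - f2 y - e * ((y - al) * (be - y)).
  have k_cont : {within `[al, be], continuous k}.
    apply: within_continuousB; first apply: within_continuousB.
    - by apply: (within_continuous_sub_itv f1_cont); lra.
    - by apply: (within_continuous_sub_itv f2_cont); lra.
    apply: continuous_subspaceT => y; apply: cvgM; first exact: cvg_cst.
    by apply: cvgM; apply: cvgB; [exact: cvg_id | exact: cvg_cst | exact: cvg_cst | exact: cvg_id].
  suff : k x <= 0 by rewrite /k; lra.
  apply: (sdq2_maximum_principle al_be k_cont) => //; rewrite /k ?subrr ?mul0r ?mulr0 ?subr0.
  - by rewrite subr_le0.
  - by rewrite subr_le0.
  move=> y /andP[al_y y_be] k_gt0; apply: near_sdq2_frequently_pos.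
  have y_in : a < y < b by apply/andP; split; lra.
  have f21_y : f2 y < f1 y.
    have : 0 <= e * ((y - al) * (be - y)) by rewrite !mulr_ge0 ?ltW //; lra.
    lra.
  apply: filterS2 (near_sdq2_sub_ge y_in f21_y e_gt0) (nbhs_right_gt 0) => t sdq2_ge t_gt0.
  suff -> : sdq2 k y t = sdq2 f1 y t - sdq2 f2 y t + 2 * e by lra.
  by rewrite /k /sdq2; field; rewrite lt0r_neq0.
have P_ge0 : 0 <= (x - al) * (be - x) by rewrite mulr_ge0 // subr_ge0.
rewrite -subr_le0; apply/ler_addgt0Pr => z z_gt0; rewrite add0r.
have e_gt0 : 0 < z / ((x - al) * (be - x) + 1) by rewrite divr_gt0 //; lra.
apply: le_trans (eps_bound _ e_gt0) _.
by rewrite mulrAC ler_pdivrMr; nra.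
Qed.

Lemma one_sided_derivatives_at_contact x0 : a < x0 < b ->
  (forall x, a <= x <= b -> f1 x <= f2 x) -> f2 x0 = f1 x0 ->
  (exists dr : R, dq f1 x0 h @[h --> 0^'+] --> dr /\ dq f2 x0 h @[h --> 0^'+] --> dr) /\
  (exists dl : R, dq f1 x0 h @[h --> 0^'-] --> dl /\ dq f2 x0 h @[h --> 0^'-] --> dl).
Proof.
move=> x0_in f12 f21_x0; have f1x0_gt0 := f1_gt0 x0_in.
have near_bounds : \forall z \near x0,
    g (f1 x0 / 2) - 1 < g (f1 z) /\ g (f2 z) < g (f1 x0 + 1) + 1.
  near=> z.
  have f1_z : f1 x0 / 2 < f1 z.
    near: z; apply: (cvgr_gt _ (within_itv_continuous_interior f1_cont x0_in)); lra.
  have f2_z : f2 z < f1 x0 + 1.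
    near: z; apply: (cvgr_lt _ (within_itv_continuous_interior f2_cont x0_in)); lra.
  have f2z_gt0 : 0 < f2 z by apply: f2_gt0; near: z; exact: near_in_open_itv.
  have g_f1 : g (f1 x0 / 2) <= g (f1 z) by apply: g_homo; rewrite ?in_itv /= ?andbT; lra.
  have g_f2 : g (f2 z) <= g (f1 x0 + 1) by apply: g_homo; rewrite ?in_itv /= ?andbT; lra.
  by split; lra.
have [rho [rho_gt0 a_rho rho_b cvx1 cvx2]] := local_convexity x0_in near_bounds.
have x0_in' : x0 - rho < x0 < x0 + rho by apply/andP; split; lra.
have [dr1 [dl1 [r1 l1 lr1]]] := convex_sub_sq_one_sided_derivatives x0_in' cvx1.
have [dr2 [dl2 [r2 l2 lr2]]] := convex_sub_sq_one_sided_derivatives x0_in' cvx2.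
have f12' y : x0 - rho < y < x0 + rho -> f1 y <= f2 y by move=> y_in; apply: f12; lra.
have [eq_r eq_l] := touching_one_sided_derivatives x0_in' f12' (esym f21_x0)
  r1 l1 lr1 (cvg_dqN r2) (cvg_dqN l2) ltac:(by rewrite lerN2).
split; [exists dr1 | exists dl1]; split => //.
- by rewrite eq_r; exact: cvg_dqN.
- by rewrite eq_l; exact: cvg_dqN.
Unshelve. all: by end_near.
Qed.

End Comparison.

End SecondDifferences.

Theorem propositionA4 (R : realType) (a b : R) (f1 f2 g : R -> R) :
  a < b ->
  {within `[a, b], continuous f1} ->
  {within `[a, b], continuous f2} ->
  {within `]0, +oo[, continuous g} ->
  (forall x, a <= x <= b -> 0 <= f1 x) ->
  (forall x, a <= x <= b -> 0 <= f2 x) ->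
  (forall x, a < x < b -> 0 < f1 x) ->
  (forall x, a < x < b -> 0 < f2 x) ->
  {in `]0, +oo[ &, {homo g : x y / x <= y}} ->
  (forall x, a < x < b -> ((g (f1 x))%:E <= upperD2 f1 x)%E) ->
  (forall x, a < x < b -> (lowerD2 f2 x <= (g (f2 x))%:E)%E) ->
  (* (1) *)
  ((f1 a = f2 a -> forall a', a < a' <= b -> f1 a' > f2 a' ->
      forall x, a' <= x <= b -> f1 x > f2 x)
  /\
  (* (2) *)
   (f1 b = f2 b -> forall b', a <= b' < b -> f1 b' > f2 b' ->
      forall x, a <= x <= b' -> f1 x > f2 x)
  /\
  (* (3) *)
   (f1 a = f2 a -> f1 b = f2 b ->
      (forall x, a <= x <= b -> f2 x >= f1 x) /\
      (forall x0, a < x0 < b -> f2 x0 = f1 x0 ->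
         (exists dr : R, dq f1 x0 h @[h --> 0^'+] --> dr /\ dq f2 x0 h @[h --> 0^'+] --> dr) /\
         (exists dl : R, dq f1 x0 h @[h --> 0^'-] --> dl /\ dq f2 x0 h @[h --> 0^'-] --> dl)))).
Proof.
move=> a_b f1_cont f2_cont _ _ _ f1_gt0 f2_gt0 g_homo f1_upperD2 f2_lowerD2.
have cmp := comparison_principle f1_cont f2_cont f2_gt0 g_homo f1_upperD2 f2_lowerD2.
split; [|split].
- move=> f12_a a' /andP[a_a' a'_b] f21_a' x /andP[a'_x x_b].
  rewrite ltNge; apply/negP => f12_x.
  have := cmp a x (lexx a) (lt_le_trans a_a' a'_x) x_b ltac:(by rewrite f12_a) f12_x a'.
  lra.
- move=> f12_b b' /andP[a_b' b'_b] f21_b' x /andP[a_x x_b'].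
  rewrite ltNge; apply/negP => f12_x.
  have := cmp x b a_x (le_lt_trans x_b' b'_b) (lexx b) f12_x ltac:(by rewrite f12_b) b'.
  lra.
- move=> f12_a f12_b.
  have f12 x : a <= x <= b -> f1 x <= f2 x by apply: cmp; rewrite ?f12_a ?f12_b.
  split=> // x0 x0_in.
  exact: (one_sided_derivatives_at_contact f1_cont f2_cont f1_gt0 f2_gt0 g_homo
    f1_upperD2 f2_lowerD2 x0_in f12).
Qed.
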